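(* Let $n\ge 1$ be an integer and $b_a,b_v,c$ real parameters. For $p,q\in[0,1]$ let $n_G\sim\mathrm{Bin}(n,p)$ and, conditionally on $n_G$, $n_V\sim\mathrm{Bin}(n-n_G,q)$ (equivalently $(n_G,n_V)$ is multinomial with $n$ trials and outcome probabilities $p,(1-p)q,(1-p)(1-q)$). Define $$w_G=\mathbb E\Big[\tfrac{b_a(n_G+1)}{n+1}\Big],\quad w_V=\mathbb E\Big[\tfrac{b_an_G}{n+1}\Big]+\mathbb E\Big[\tfrac{b_v(n_V+1)}{n-n_G+1}\Big]-c,\quad w_D=\mathbb E\Big[\tfrac{b_an_G}{n+1}\Big]+\mathbb E\Big[\tfrac{b_vn_V}{n-n_G+1}\Big],$$ and $\langle w\rangle_{V,D}=qw_V+(1-q)w_D$. Then $$w_G-\langle w\rangle_{V,D}=\frac{b_a}{n+1}-q(b_v-c),\qquad w_V-w_D=\frac{b_v}{n+1}\sum_{k=0}^n p^k-c.$$ Consequently the dynamics $\dot p=p(1-p)(w_G-\langle w\rangle_{V,D})$, $\dot q=q(1-q)(w_V-w_D)$ take the form $$\dot p=p(1-p)\Big(\frac{b_a}{n+1}-q(b_v-c)\Big),\qquad \dot q=q(1-q)\Big(\frac{b_v}{n+1}\sum_{k=0}^n p^k-c\Big).$$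
   Context: This is the ''double goods game'': $p$ is the proportion of glycolytic cells (G), $q$ the proportion of VEGF (over)producers (V) among aerobic cells (V and D). $b_a$ is the benefit per unit of acidification (a public good produced by G cells and shared among all $n+1$ group members), $b_v$ the benefit per unit of vascularization (a club good produced by V cells at cost $c$ and shared only among the $n-n_G+1$ aerobic members of the group), and $n$ the number of interaction partners. *)

From mathcomp Require Import all_boot all_order all_algebra.
From mathcomp Require Import reals.
Set Implicit Arguments. Unset Strict Implicit. Unset Printing Implicit Defensive.
Import Order.TTheory GRing.Theory Num.Theory.
Local Open Scope ring_scope.

Section DoubleGoods.
Variable R : realType.

Definition binom_pmf (m : nat) (r : R) (k : nat) : R :=
  'C(m, k)%:R * r ^+ k * (1 - r) ^+ (m - k).

Definition Exp2 (n : nat) (p q : R) (f : nat -> nat -> R) : R :=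
  \sum_(i < n.+1) \sum_(j < (n - i).+1)
     binom_pmf n p i * binom_pmf (n - i) q j * f i j.

Definition wG (n : nat) (ba bv c p q : R) : R :=
  Exp2 n p q (fun nG _ => ba * (nG.+1)%:R / (n.+1)%:R).

Definition wV (n : nat) (ba bv c p q : R) : R :=
  Exp2 n p q (fun nG _ => ba * nG%:R / (n.+1)%:R)
  + Exp2 n p q (fun nG nV => bv * (nV.+1)%:R / ((n - nG).+1)%:R) - c.

Definition wD (n : nat) (ba bv c p q : R) : R :=
  Exp2 n p q (fun nG _ => ba * nG%:R / (n.+1)%:R)
  + Exp2 n p q (fun nG nV => bv * nV%:R / ((n - nG).+1)%:R).

Definition wVD (n : nat) (ba bv c p q : R) : R :=
  q * wV n ba bv c p q + (1 - q) * wD n ba bv c p q.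

Definition pdot (n : nat) (ba bv c p q : R) : R :=
  p * (1 - p) * (wG n ba bv c p q - wVD n ba bv c p q).
Definition qdot (n : nat) (ba bv c p q : R) : R :=
  q * (1 - q) * (wV n ba bv c p q - wD n ba bv c p q).

End DoubleGoods.

From mathcomp Require Import all_boot all_order all_algebra.
From mathcomp Require Import reals.
From mathcomp Require Import ring.
Set Implicit Arguments. Unset Strict Implicit. Unset Printing Implicit Defensive.
Import Order.TTheory GRing.Theory Num.Theory.
Local Open Scope ring_scope.

(* Conditionally on n_G = i, the count n_V has mean q (n - i), so every
   expectation in the payoffs reduces to a moment of n_G ~ Bin(n, p); the only
   non-trivial one is E[1/(n - n_G + 1)].  Since (n+1) C(n,i) = (n-i+1) C(n+1,i),
   it equals 1/(n+1) times the expansion of ((1-p) + p)^(n+1) = 1 with its top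
   term p^(n+1) dropped and one factor (1-p) removed, i.e. the geometric sum
   1 + p + ... + p^n divided by n+1. *)

Section BinomialMoments.
Variable R : realType.
Implicit Types (r p : R) (m n : nat).

Lemma sum_binom_pmf m r : \sum_(j < m.+1) binom_pmf m r j = 1.
Proof.
have := exprDn (1 - r) r m; rewrite subrK expr1n => ->.
by apply: eq_bigr => i _; rewrite /binom_pmf -mulr_natl; ring.
Qed.

Lemma sum_binom_pmf_mulr_nat m r :
  \sum_(j < m.+1) binom_pmf m r j * j%:R = m%:R * r.
Proof.
case: m => [|m]; first by rewrite big_ord1 /= mulr0 mul0r.
rewrite big_ord_recl /= mulr0 add0r.
rewrite (eq_bigr (fun i : 'I_m.+1 => m.+1%:R * r * binom_pmf m r i)).
  by rewrite -big_distrr /= sum_binom_pmf mulr1.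
move=> i _; rewrite /bump /= add1n /binom_pmf subSS exprS.
have bin_diag : (i.+1)%:R * 'C(m.+1, i.+1)%:R = m.+1%:R * 'C(m, i)%:R :> R.
  by rewrite -!natrM -mul_bin_diag.
rewrite [LHS](_ : _ = ((i.+1)%:R * 'C(m.+1, i.+1)%:R) * r * r ^+ i * (1 - r) ^+ (m - i)).
  by rewrite bin_diag; ring.
by ring.
Qed.

Lemma truncated_binomial_complement n p :
  (1 - p) * \sum_(i < n.+1) 'C(n.+1, i)%:R * p ^+ i * (1 - p) ^+ (n - i)
  + p ^+ n.+1 = 1.
Proof.
have := exprDn (1 - p) p n.+1; rewrite subrK expr1n => binomial_one.
rewrite [RHS]binomial_one [RHS]big_ord_recr /= subnn expr0 mul1r binn mulr1n big_distrr /=.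
congr (_ + _); apply: eq_bigr => i _.
by rewrite subSn ?(leq_ord i) // exprS -mulr_natl; ring.
Qed.

Lemma geometric_complement n p :
  (1 - p) * \sum_(k < n.+1) p ^+ k + p ^+ n.+1 = 1.
Proof.
have -> : (1 - p) * \sum_(k < n.+1) p ^+ k = - ((p - 1) * \sum_(k < n.+1) p ^+ k).
  by ring.
by rewrite -subrX1; ring.
Qed.

Lemma truncated_binomial_geometric n p :
  \sum_(i < n.+1) 'C(n.+1, i)%:R * p ^+ i * (1 - p) ^+ (n - i)
  = \sum_(k < n.+1) p ^+ k.
Proof.
have [->|p_neq1] := eqVneq p 1.
  rewrite subrr big_ord_recr /= subnn expr0 binSn mulr1 big1 ?add0r.
    by under eq_bigr do rewrite expr1n; rewrite expr1n mulr1 sumr_const card_ord.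
  move=> i _; have /negPf n_i_neq0 : (n - i != 0)%N by rewrite subn_eq0 -ltnNge.
  by rewrite expr0n n_i_neq0 mulr0.
apply: (mulfI (x := 1 - p)); first by rewrite subr_eq0 eq_sym.
apply: (addIr (p ^+ n.+1)).
by rewrite truncated_binomial_complement geometric_complement.
Qed.

Lemma binom_pmf_div_succ n p (i : 'I_n.+1) :
  binom_pmf n p i / ((n - i).+1)%:R
  = (n.+1)%:R^-1 * ('C(n.+1, i)%:R * p ^+ i * (1 - p) ^+ (n - i)).
Proof.
have bin_down : (n.+1)%:R * 'C(n, i)%:R = ((n - i).+1)%:R * 'C(n.+1, i)%:R :> R.
  by rewrite -!natrM -subSn ?(leq_ord i) // mul_bin_down.
have n1_neq0 : (n.+1)%:R != 0 :> R by rewrite pnatr_eq0.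
have ni1_neq0 : ((n - i).+1)%:R != 0 :> R by rewrite pnatr_eq0.
rewrite /binom_pmf; apply: (mulfI n1_neq0); apply: (mulfI ni1_neq0).
transitivity ((n.+1)%:R * 'C(n, i)%:R * (p ^+ i * (1 - p) ^+ (n - i))).
  by field; rewrite -natr1 addrC in ni1_neq0.
by rewrite bin_down; field; rewrite -natr1 addrC in n1_neq0.
Qed.

Lemma sum_binom_pmf_div_succ n p :
  \sum_(i < n.+1) binom_pmf n p i / ((n - i).+1)%:R
  = (n.+1)%:R^-1 * \sum_(k < n.+1) p ^+ k.
Proof.
under eq_bigr do rewrite binom_pmf_div_succ.
by rewrite -big_distrr truncated_binomial_geometric.
Qed.

End BinomialMoments.

Section Exp2Calculus.
Variables (R : realType) (n : nat) (p q : R).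
Implicit Types f g : nat -> nat -> R.

Lemma eq_Exp2 f g : f =2 g -> Exp2 n p q f = Exp2 n p q g.
Proof. by move=> fg; apply: eq_bigr => i _; apply: eq_bigr => j _; rewrite fg. Qed.

Lemma Exp2B f g :
  Exp2 n p q f - Exp2 n p q g = Exp2 n p q (fun i j => f i j - g i j).
Proof.
rewrite /Exp2 -sumrB; apply: eq_bigr => i _; rewrite -sumrB.
by apply: eq_bigr => j _; ring.
Qed.

Lemma Exp2_fst (h : nat -> R) :
  Exp2 n p q (fun i _ => h i) = \sum_(i < n.+1) binom_pmf n p i * h i.
Proof.
apply: eq_bigr => i _.
under eq_bigr do rewrite mulrAC.
by rewrite -big_distrr /= sum_binom_pmf mulr1.
Qed.

Lemma Exp2_mul_snd (h : nat -> R) :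
  Exp2 n p q (fun i j => h i * j%:R)
  = \sum_(i < n.+1) binom_pmf n p i * (h i * ((n - i)%:R * q)).
Proof.
apply: eq_bigr => i _.
rewrite (eq_bigr (fun j : 'I_(n - i).+1 =>
  binom_pmf n p i * h i * (binom_pmf (n - i) q j * j%:R))); last by move=> j _; ring.
by rewrite -big_distrr /= sum_binom_pmf_mulr_nat; ring.
Qed.

End Exp2Calculus.

Section DoubleGoodsPayoffs.
Variables (R : realType) (n : nat) (ba bv c p q : R).

Lemma wV_sub_wD :
  wV n ba bv c p q - wD n ba bv c p q
  = bv / (n.+1)%:R * (\sum_(k < n.+1) p ^+ k) - c.
Proof.
rewrite /wV /wD.
have -> : forall A B1 B0 : R, A + B1 - c - (A + B0) = (B1 - B0) - c by move=> *; ring.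
rewrite Exp2B (eq_Exp2 n p q (g := fun i _ => bv * ((n - i).+1)%:R^-1)); last first.
  by move=> i j; rewrite -natr1; ring.
rewrite Exp2_fst; under eq_bigr do rewrite mulrCA.
by rewrite -big_distrr /= sum_binom_pmf_div_succ mulrA.
Qed.

Lemma Exp2_vascular_benefit_D :
  Exp2 n p q (fun nG nV => bv * nV%:R / ((n - nG).+1)%:R)
  = q * bv * (1 - (n.+1)%:R^-1 * \sum_(k < n.+1) p ^+ k).
Proof.
rewrite (eq_Exp2 n p q (g := fun i j => bv / ((n - i).+1)%:R * j%:R)); last first.
  by move=> i j; ring.
rewrite Exp2_mul_snd -sum_binom_pmf_div_succ -[X in _ * (X - _)](sum_binom_pmf n p).
rewrite -sumrB big_distrr /=; apply: eq_bigr => i _.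
have ni1_neq0 : ((n - i).+1)%:R != 0 :> R by rewrite pnatr_eq0.
by rewrite -natr1 in ni1_neq0 *; field.
Qed.

Lemma wG_sub_wD :
  wG n ba bv c p q - wD n ba bv c p q
  = ba / (n.+1)%:R - q * bv * (1 - (n.+1)%:R^-1 * \sum_(k < n.+1) p ^+ k).
Proof.
rewrite /wG /wD -Exp2_vascular_benefit_D.
have -> : forall G A B0 : R, G - (A + B0) = (G - A) - B0 by move=> *; ring.
rewrite Exp2B (eq_Exp2 n p q (g := fun _ _ => ba / (n.+1)%:R)); last first.
  by move=> i j; rewrite -natr1; ring.
by rewrite Exp2_fst -big_distrl /= sum_binom_pmf mul1r.
Qed.

Lemma wG_sub_wVD :
  wG n ba bv c p q - wVD n ba bv c p q = ba / (n.+1)%:R - q * (bv - c).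
Proof.
have -> : wG n ba bv c p q - wVD n ba bv c p q
          = (wG n ba bv c p q - wD n ba bv c p q)
            - q * (wV n ba bv c p q - wD n ba bv c p q) by rewrite /wVD; ring.
by rewrite wG_sub_wD wV_sub_wD; ring.
Qed.

End DoubleGoodsPayoffs.

Theorem mainTheorem3 (R : realType) (n : nat) (ba bv c p q : R) :
  (1 <= n)%N -> 0 <= p <= 1 -> 0 <= q <= 1 ->
  [/\ wG n ba bv c p q - wVD n ba bv c p q = ba / (n.+1)%:R - q * (bv - c),
      wV n ba bv c p q - wD n ba bv c p q
        = bv / (n.+1)%:R * (\sum_(k < n.+1) p ^+ k) - c,
      pdot n ba bv c p q = p * (1 - p) * (ba / (n.+1)%:R - q * (bv - c))
    & qdot n ba bv c p q
        = q * (1 - q) * (bv / (n.+1)%:R * (\sum_(k < n.+1) p ^+ k) - c)].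
Proof.
move=> _ _ _.
by split; rewrite /pdot /qdot ?wG_sub_wVD ?wV_sub_wD.
Qed.
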